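(* A topical function $f: \mathbb{R}^n \to \mathbb{R}^n$ is indecomposable if and only if the aggregated graph $\mathcal{G}^\infty(f)$ is strongly connected.
   Context: $f: \mathbb{R}^n \to \mathbb{R}^n$ is topical if $f(x+h) = f(x) + h$ for all $h \in \mathbb{R}$, $x \in \mathbb{R}^n$ (adding a scalar to every coordinate) and $x \le y$ componentwise implies $f(x) \le f(y)$. For $J \subseteq \{1,\dots,n\}$, $e_J$ is its characteristic vector. $f$ is decomposable if there is a partition $\{1,\dots,n\} = I \cup J$ into disjoint nonempty sets with $\lim_{u\to\infty} f_i(u e_J) < \infty$ for all $i \in I$; indecomposable otherwise. Aggregated graphs: $\mathcal{G}^1(f) = \mathcal{G}(f)$ is the directed graph on $\{1,\dots,n\}$ with an edge $i\to j$ iff $\lim_{u\to\infty} f_i(u e_{\{j\}}) = \infty$; each vertex $i$ is associated with the set $\sigma(i) = \{i\}$. For $k \ge 2$, the vertices of $\mathcal{G}^k(f)$ are the strongly connected components of $\mathcal{G}^{k-1}(f)$ (equivalence classes under: $X$ communicates with $Y$ iff $X = Y$ or there are directed paths both ways), a component $X$ being associated with $\sigma(X) = \bigcup_{Y \in X} \sigma(Y) \subseteq \{1,\dots,n\}$; there is an edge from $I$ to $J$ in $\mathcal{G}^k(f)$ iff there exists $i \in \sigma(I)$ with $\lim_{u\to\infty} f_i(u e_{\sigma(J)}) = \infty$. There is a least $N \le n$ such that $\mathcal{G}^k(f)$ is isomorphic to $\mathcal{G}^N(f)$ for all $k \ge N$, and $\mathcal{G}^\infty(f) := \mathcal{G}^N(f)$.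 *)

From HB Require Import structures.
From mathcomp Require Import all_boot all_order all_algebra.
From mathcomp Require Import all_classical all_reals all_analysis.
From Stdlib Require Import Relation_Operators.
Set Implicit Arguments. Unset Strict Implicit. Unset Printing Implicit Defensive.
Import Order.TTheory GRing.Theory Num.Theory.
Import numFieldNormedType.Exports.
Local Open Scope ring_scope.

Section Topical.
Variables (R : realType) (n : nat).

Definition vec := 'I_n -> R.

Definition charvec (J : {set 'I_n}) : vec := fun j => if j \in J then 1 else 0.

Definition scal_char (u : R) (J : {set 'I_n}) : vec := fun j => u * charvec J j.

Definition topical (f : vec -> vec) : Prop :=
  (forall (x : vec) (h : R), f (fun j => x j + h) = (fun i => f x i + h)) /\
  (forall x y : vec, (forall j, x j <= y j) -> forall i, f x i <= f y i).

Definition lim_infty (f : vec -> vec) (i : 'I_n) (J : {set 'I_n}) : Prop :=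
  ((f (scal_char u J) i) @[u --> +oo%R] --> +oo%R)%classic.

Definition lim_finite (f : vec -> vec) (i : 'I_n) (J : {set 'I_n}) : Prop :=
  exists l : R, ((f (scal_char u J) i) @[u --> +oo%R] --> l)%classic.

Definition decomposable (f : vec -> vec) : Prop :=
  exists I J : {set 'I_n},
    [/\ I :&: J = finset.set0, I :|: J = finset.setT, I != finset.set0, J != finset.set0 &
        forall i, i \in I -> lim_finite f i J].

Definition indecomposable (f : vec -> vec) : Prop := ~ decomposable f.

(* A vertex X of G^k is represented by its associated set
   sigma(X) (a subset of {1..n}); the vertex set of G^k is thus a set of
   subsets of 'I_n.  Edge from S to T: exists i in S with
   lim_{u->oo} f_i(u e_T) = oo.  (For k = 1 this is the edge relation of
   G(f) on singletons.) *)
Definition edge (f : vec -> vec) (S T : {set 'I_n}) : Prop :=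
  exists i, i \in S /\ lim_infty f i T.

Definition gedge (f : vec -> vec) (P : {set {set 'I_n}}) (S T : {set 'I_n}) : Prop :=
  [/\ S \in P, T \in P & edge f S T].

Definition reach (f : vec -> vec) (P : {set {set 'I_n}}) : {set 'I_n} -> {set 'I_n} -> Prop :=
  @clos_refl_trans _ (gedge f P).

Definition strongly_connected (f : vec -> vec) (P : {set {set 'I_n}}) : Prop :=
  forall S T, S \in P -> T \in P -> reach f P S T.

Definition communicates (f : vec -> vec) (P : {set {set 'I_n}}) (S T : {set 'I_n}) : Prop :=
  S = T \/ (reach f P S T /\ reach f P T S).

(* vertices of the next graph: for each strongly connected component, the union
   of the sets associated to its members *)
Definition aggregate (f : vec -> vec) (P : {set {set 'I_n}}) : {set {set 'I_n}} :=
  [set \bigcup_(T in P | `[< communicates f P S T >]) T | S in P].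

Definition singletons : {set {set 'I_n}} := [set [set i] | i : 'I_n].

(* part f k = vertex set of G^{k+1}(f) *)
Fixpoint part (f : vec -> vec) (k : nat) : {set {set 'I_n}} :=
  match k with
  | 0 => singletons
  | k'.+1 => aggregate f (part f k')
  end.

Definition Gvert (f : vec -> vec) (k : nat) : {set {set 'I_n}} := part f k.-1.

Definition graph_iso (f : vec -> vec) (P1 P2 : {set {set 'I_n}}) : Prop :=
  exists phi : {set 'I_n} -> {set 'I_n},
    [/\ {in P1 &, injective phi}, phi @: P1 = P2 &
        forall S T, S \in P1 -> T \in P1 -> (edge f S T <-> edge f (phi S) (phi T))].

Definition stabilizes_at (f : vec -> vec) (N : nat) : Prop :=
  (1 <= N)%N /\ forall k, (N <= k)%N -> graph_iso f (Gvert f k) (Gvert f N).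

Definition least_stab (f : vec -> vec) (N : nat) : Prop :=
  stabilizes_at f N /\ forall M, stabilizes_at f M -> (N <= M)%N.

(* G^oo(f) := G^N(f) for the least such N is strongly connected *)
Definition Ginf_strongly_connected (f : vec -> vec) : Prop :=
  forall N, least_stab f N -> strongly_connected f (Gvert f N).

End Topical.

From Pilot Require Import Defs.
From mathcomp Require Import all_boot all_order all_algebra.
From mathcomp Require Import all_classical all_reals all_analysis.
From mathcomp Require Import lra.
From Stdlib Require Import Relation_Operators.
Set Implicit Arguments. Unset Strict Implicit. Unset Printing Implicit Defensive.
Import Order.TTheory GRing.Theory Num.Theory.
Import numFieldNormedType.Exports.
Local Open Scope ring_scope.

(* Only monotonicity of [f] matters.  It makes each [u |-> f_i(u e_J)]
   nondecreasing, so the limit is either +oo or finite, and divergence for [T]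
   forces divergence for every [J] containing [T].
   Each aggregation step merges the blocks of a partition of {1..n} along
   communicating classes, so the number of blocks decreases until no two
   distinct blocks communicate; from then on G^k no longer changes, and G^oo is
   isomorphic to the graph on that last partition.  If it has two blocks, a
   block [T] with the fewest ancestors receives no edge from another block [S]
   (otherwise [S] would have strictly fewer ancestors, as [T] cannot reach [S]),
   so [(~: T, T)] decomposes [f].  Conversely, if [(I, J)] decomposes [f], every
   block of every G^k lies in [I] or in [J], and no path leads from a block in
   [I] to a block in [J]. *)

Lemma iter_fixpoint_ex (T : Type) (g : T -> T) (m : T -> nat) :
  (forall x, (m (g x) < m x)%N \/ g x = x) ->
  forall x, exists k, g (iter k g x) = iter k g x.
Proof.
move=> shrink x; have [k] := ubnP (m x); elim: k x => // k IHk x mx.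
have [lt|fix_x] := shrink x; last by exists 0%N.
have [k' fix_k'] := IHk (g x) (leq_trans lt mx).
by exists k'.+1; rewrite iterSr.
Qed.

Lemma iter_stable (T : Type) (g : T -> T) (x : T) (K k : nat) :
  g (iter K g x) = iter K g x -> (K <= k)%N -> iter k g x = iter K g x.
Proof. by move=> fix_K /subnK <-; rewrite iterD iter_fix. Qed.

Lemma trivIset_sharedP (T : finType) (P : {set {set T}}) :
  reflect (forall A B x, A \in P -> B \in P -> x \in A -> x \in B -> A = B)
          (finset.trivIset P).
Proof.
apply: (iffP idP) => [tiP A B x AP BP xA xB | shared].
  by rewrite -(finset.def_pblock tiP AP xA) (finset.def_pblock tiP BP xB).
apply/finset.trivIsetP => A B AP BP; apply: contraR.
by case/pred0Pn => x /andP[xA xB]; apply/eqP; apply: (shared A B x).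
Qed.

Lemma partition_block_ex (T : finType) (P : {set {set T}}) x :
  finset.partition P [set: T] -> exists2 A, A \in P & x \in A.
Proof.
move=> partP; have : x \in finset.cover P.
  by rewrite (finset.cover_partition partP) finset.in_setT.
by case/bigcupP=> A; exists A.
Qed.

Section Monotone.
Variables (R : realType) (n : nat) (f : vec R n -> vec R n).
Hypothesis f_mono :
  forall x y : vec R n, (forall j, x j <= y j) -> forall i, f x i <= f y i.

Lemma scal_char_subset (u : R) (T J : {set 'I_n}) j :
  0 <= u -> T \subset J -> scal_char u T j <= scal_char u J j.
Proof.
move=> u0 TJ; rewrite /scal_char /charvec.
case: ifPn => [/(fintype.subsetP TJ)->//|_].
by case: ifP; rewrite ?mulr1 mulr0.
Qed.

Lemma lim_infty_or_finite i J : lim_infty f i J \/ lim_finite f i J.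
Proof.
pose g u := f (scal_char u J) i.
have g_nd : nondecreasing_fun g.
  move=> u v uv; apply: f_mono => j.
  by rewrite /scal_char ler_wpM2r // /charvec; case: ifP.
have [ub|nub] := pselect (has_ubound (range g)).
  by right; exists (sup (range g)); apply: nondecreasing_cvgr.
left; apply/cvgryPgt => A.
have [u Au] : exists u, A < g u.
  apply/not_existsP => le_gA; apply: nub; exists A => _ [u _ <-].
  by rewrite leNgt; apply/negP => /(le_gA u).
near=> v; apply: (lt_le_trans Au); apply: g_nd.
by near: v; apply: nbhs_pinfty_ge; rewrite num_real.
Unshelve. all: by end_near. Qed.

Lemma lim_finite_subset i (T J : {set 'I_n}) :
  T \subset J -> lim_finite f i J -> ~ lim_infty f i T.
Proof.
move=> TJ [l fJ_l] fT_oo.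
have fJ_oo : ((f (scal_char u J) i) @[u --> +oo] --> +oo)%classic.
  apply/cvgryPge => A; near=> u.
  apply: (@le_trans _ _ (f (scal_char u T) i)); first by near: u; apply: cvgry_ge.
  apply: f_mono => j; apply: scal_char_subset TJ.
  by near: u; apply: nbhs_pinfty_ge; rewrite num_real.
have [u [big close]] : exists u, l + 1 < f (scal_char u J) i
    /\ `|l - f (scal_char u J) i| < 1.
  have /cvgrPdist_lt /(_ 1 ltr01) near_l := fJ_l.
  by have [u []] := filter_ex (filterI (cvgry_gt fJ_oo (l + 1)) near_l); exists u.
move: close; rewrite ltr_norml => /andP[+ _]; move: big.
set y := f _ i; lra.
Unshelve. all: by end_near. Qed.

End Monotone.

Section Aggregation.
Variables (R : realType) (n : nat) (f : vec R n -> vec R n).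
Implicit Types (P : {set {set 'I_n}}) (S T X : {set 'I_n}).

Definition class_union P S : {set 'I_n} :=
  \bigcup_(T in P | `[< communicates f P S T >]) T.

Lemma aggregateE P : aggregate f P = [set class_union P S | S in P].
Proof. by []. Qed.

Lemma communicates_sym P S T : communicates f P S T -> communicates f P T S.
Proof. by case=> [->|[]]; [left | right]. Qed.

Lemma communicates_trans P S T X :
  communicates f P S T -> communicates f P T X -> communicates f P S X.
Proof.
case=> [->//|[ST TS]] [<-|[TX XT]]; first by right.
by right; split; apply: rt_trans; eassumption.
Qed.

Lemma class_union_eq P S T : communicates f P S T -> class_union P S = class_union P T.
Proof.
move=> ST; apply: eq_bigl => X; apply: andb_id2l => _; apply/asboolP/asboolP.
  exact: communicates_trans (communicates_sym ST).
exact: communicates_trans.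
Qed.

Lemma sub_class_union P S : S \in P -> S \subset class_union P S.
Proof. by move=> SP; apply: (finset.bigcup_sup S); rewrite SP; apply/asboolP; left. Qed.

Lemma mem_class_unionP P S i :
  i \in class_union P S -> exists2 T, T \in P & communicates f P S T /\ i \in T.
Proof. by case/bigcupP => T /andP[TP /asboolP ST] iT; exists T. Qed.

Lemma aggregate_lt_or_fixed P : (#|aggregate f P| < #|P|)%N \/ aggregate f P = P.
Proof.
rewrite aggregateE.
case: (boolP (#|class_union P @: P| == #|P|)) => [/imset_injP inj|ne].
  right; rewrite -[RHS]imset_id; apply: eq_in_imset => S SP.
  apply/eqP; rewrite finset.eqEsubset sub_class_union // andbT.
  apply/fintype.subsetP => i /mem_class_unionP[T TP [ST iT]].
  by rewrite (inj S T SP TP (class_union_eq ST)).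
by left; rewrite ltn_neqAle ne leq_imset_card.
Qed.

Lemma partE k : part f k = iter k (aggregate f) (Defs.singletons n).
Proof. by elim: k => //= k ->. Qed.

Lemma part_fixpoint_ex : exists K, aggregate f (part f K) = part f K.
Proof.
have [K fix_K] := iter_fixpoint_ex aggregate_lt_or_fixed (Defs.singletons n).
by exists K; rewrite partE.
Qed.

Lemma part_stable K k :
  aggregate f (part f K) = part f K -> (K <= k)%N -> part f k = part f K.
Proof. by rewrite !partE; apply: iter_stable. Qed.

Lemma partition_singletons : finset.partition (Defs.singletons n) [set: 'I_n].
Proof.
apply/and3P; split.
- apply/eqP/setP => i; rewrite finset.in_setT; apply/bigcupP.
  by exists [set i]; [exact: imset_f | exact: set11].
- apply/trivIset_sharedP => _ _ i /imsetP[a _ ->] /imsetP[b _ ->].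
  by rewrite !inE => /eqP-> /eqP->.
- by apply/imsetP => -[i _ /setP/(_ i)]; rewrite !inE eqxx.
Qed.

Lemma partition_aggregate P :
  finset.partition P [set: 'I_n] -> finset.partition (aggregate f P) [set: 'I_n].
Proof.
move=> partP; have /trivIset_sharedP tiP := finset.partition_trivIset partP.
rewrite aggregateE; apply/and3P; split.
- apply/eqP/setP => i; rewrite finset.in_setT; apply/bigcupP.
  have [S SP iS] := partition_block_ex i partP.
  exists (class_union P S); first exact: imset_f.
  exact: fintype.subsetP (sub_class_union SP) i iS.
- apply/trivIset_sharedP => _ _ i /imsetP[S SP ->] /imsetP[S' S'P ->].
  move=> /mem_class_unionP[T TP [ST iT]] /mem_class_unionP[T' T'P [S'T' iT']].
  by rewrite (class_union_eq ST) (tiP T T' i) // -(class_union_eq S'T').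
- apply/imsetP => -[S SP U0]; have := sub_class_union SP.
  by rewrite -U0 finset.subset0; apply/negP; exact: finset.partition_neq0 partP SP.
Qed.

Lemma partition_part k : finset.partition (part f k) [set: 'I_n].
Proof.
elim: k => [|k]; [exact: partition_singletons | exact: partition_aggregate].
Qed.

Lemma fixed_communicates_eq P S T :
  finset.partition P [set: 'I_n] -> aggregate f P = P -> S \in P -> T \in P ->
  communicates f P S T -> S = T.
Proof.
move=> partP fixP SP TP ST.
have /trivIset_sharedP tiP := finset.partition_trivIset partP.
have class_unionK X : X \in P -> class_union P X = X.
  move=> XP; have /set0Pn[x xX] := finset.partition_neq0 partP XP.
  have UXP : class_union P X \in P by rewrite -{2}fixP aggregateE imset_f.
  exact: tiP x UXP XP (fintype.subsetP (sub_class_union XP) x xX) xX.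
by rewrite -(class_unionK S SP) (class_union_eq ST) class_unionK.
Qed.

End Aggregation.

Section Graph.
Variables (R : realType) (n : nat) (f : vec R n -> vec R n).
Implicit Types (P : {set {set 'I_n}}) (S T : {set 'I_n}).

Lemma reach_imset (phi : {set 'I_n} -> {set 'I_n}) P1 P2 S T :
  phi @: P1 = P2 ->
  (forall S T, S \in P1 -> T \in P1 -> (edge f S T <-> edge f (phi S) (phi T))) ->
  reach f P1 S T -> reach f P2 (phi S) (phi T).
Proof.
move=> im_phi edge_phi; elim=> [X Y [XP YP XY]|X|X Y Z _ reachXY _ reachYZ].
- apply: rt_step; split; rewrite -?im_phi ?imset_f //.
  exact/(edge_phi X Y XP YP).
- exact: rt_refl.
- exact: rt_trans reachXY reachYZ.
Qed.

Lemma strongly_connected_iso P1 P2 :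
  graph_iso f P1 P2 -> strongly_connected f P1 -> strongly_connected f P2.
Proof.
case=> phi [_ im_phi edge_phi] sc X Y.
rewrite -im_phi => /imsetP[S SP ->] /imsetP[T TP ->]; rewrite im_phi.
exact: reach_imset im_phi edge_phi (sc S T SP TP).
Qed.

Lemma Gvert_stable K k :
  aggregate f (part f K) = part f K -> (K < k)%N -> Gvert f k = part f K.
Proof.
move=> fixK ltKk; apply: part_stable fixK _.
by rewrite -ltnS prednK ?(leq_ltn_trans _ ltKk).
Qed.

Lemma stabilizes_at_fixpoint K :
  aggregate f (part f K) = part f K -> stabilizes_at f K.+1.
Proof.
move=> fixK; split=> // k leKk; rewrite !(Gvert_stable fixK) //.
by exists id; split=> //; exact: finset.imset_id.
Qed.

Lemma least_stab_ex : exists N, least_stab f N.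
Proof.
have [K /stabilizes_at_fixpoint stabK] := part_fixpoint_ex f.
have stab_ex : exists M, `[< stabilizes_at f M >] by exists K.+1; apply/asboolP.
case: (ex_minnP stab_ex) => N /asboolP stabN minN.
by exists N; split=> // M /asboolP /minN.
Qed.

Lemma graph_iso_fixpoint K N :
  aggregate f (part f K) = part f K -> stabilizes_at f N ->
  graph_iso f (part f K) (Gvert f N).
Proof.
move=> fixK [_ stabN]; rewrite -(Gvert_stable fixK (leq_maxr N K.+1)).
exact: stabN (leq_maxl _ _).
Qed.

End Graph.

Section Indecomposable.
Variables (R : realType) (n : nat) (f : vec R n -> vec R n).
Hypothesis f_mono :
  forall x y : vec R n, (forall j, x j <= y j) -> forall i, f x i <= f y i.
Variable P : {set {set 'I_n}}.
Hypothesis partP : finset.partition P [set: 'I_n].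
Hypothesis fixP : aggregate f P = P.

Lemma decomposable_of_fixpoint : (1 < #|P|)%N -> decomposable f.
Proof.
case/card_gt1P => X0 [Y0 [X0P Y0P X0Y0]].
have /trivIset_sharedP tiP := finset.partition_trivIset partP.
pose ancestors T := [set X in P | `[< reach f P X T >]].
have [T TP minT] := arg_minnP (fun X => #|ancestors X|) X0P.
have {}TP : T \in P by [].
have no_edge_in S : S \in P -> S != T -> ~ edge f S T.
  move=> SP ST edgeST; have stepST : gedge f P S T by [].
  have : ancestors S \proper ancestors T.
    apply/properP; split.
      apply/fintype.subsetP => X; rewrite !inE => /andP[-> /asboolP XS] /=.
      by apply/asboolP; apply: rt_trans XS (rt_step _ _ _ _ stepST).
    exists T; first by rewrite inE TP; apply/asboolP; exact: rt_refl.
    rewrite inE TP /=; apply/asboolP => TS; move/eqP: ST; apply.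
    apply: (fixed_communicates_eq partP fixP SP TP).
    by right; split=> //; exact: rt_step.
  by move/proper_card; rewrite ltnNge minT.
have other_block x : x \notin T -> exists2 S, S \in P & (S != T) && (x \in S).
  move=> xT; have [S SP xS] := partition_block_ex x partP.
  exists S; rewrite // xS andbT.
  by apply: contraNneq xT => eST; rewrite -eST.
exists (~: T), T; split.
- by rewrite finset.setIC finset.setICr.
- by rewrite finset.setUC finset.setUCr.
- have [X XP XT] : exists2 X, X \in P & X != T.
    by case: (eqVneq X0 T) => [eX0|]; [exists Y0; rewrite // -eX0 eq_sym | exists X0].
  have /set0Pn[x xX] := finset.partition_neq0 partP XP.
  apply/set0Pn; exists x; rewrite inE; apply: contra XT => xT.
  by apply/eqP; apply: tiP x XP TP xX xT.
- exact: finset.partition_neq0 partP TP.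
- move=> i; rewrite inE => /other_block[S SP /andP[ST iS]].
  have [iT_oo|//] := lim_infty_or_finite f_mono i T.
  by case: (no_edge_in S SP ST); exists i.
Qed.

Lemma strongly_connected_fixpoint : indecomposable f -> strongly_connected f P.
Proof.
move=> indec S T SP TP.
have [/card_le1_eqP P_le1|/decomposable_of_fixpoint //] := leqP #|P| 1.
by rewrite (P_le1 S T SP TP); exact: rt_refl.
Qed.

End Indecomposable.

Section Decomposable.
Variables (R : realType) (n : nat) (f : vec R n -> vec R n).
Hypothesis f_mono :
  forall x y : vec R n, (forall j, x j <= y j) -> forall i, f x i <= f y i.
Variables (I J : {set 'I_n}).
Hypothesis IJ0 : I :&: J = finset.set0.
Hypothesis IJT : I :|: J = [set: 'I_n].
Hypothesis I_finite : forall i, i \in I -> lim_finite f i J.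

Lemma reach_subset_left (P : {set {set 'I_n}}) (S T : {set 'I_n}) :
  (forall X, X \in P -> X \subset I \/ X \subset J) ->
  reach f P S T -> S \subset I -> T \subset I.
Proof.
move=> split_P; elim=> [X Y [_ YP [i [iX iY_oo]]] XI|//|X Y Z _ XY _ YZ /XY/YZ//].
case: (split_P Y YP) => // YJ; exfalso.
have iI : i \in I := fintype.subsetP XI i iX.
exact: (lim_finite_subset f_mono YJ (I_finite iI) iY_oo).
Qed.

Lemma part_split k S : S \in part f k -> S \subset I \/ S \subset J.
Proof.
elim: k S => [|k IHk] S /=.
  case/imsetP=> i _ ->; rewrite !finset.sub1set.
  have : i \in I :|: J by rewrite IJT finset.in_setT.
  by rewrite inE => /orP[]; [left | right].
rewrite aggregateE => /imsetP[S' S'P ->].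
have same_side T : T \in part f k -> communicates f (part f k) S' T ->
    (T \subset I) = (S' \subset I).
  move=> TP [->//|[S'T TS']]; apply/idP/idP.
    exact: reach_subset_left IHk TS'.
  exact: reach_subset_left IHk S'T.
have [S'I|S'nI] := boolP (S' \subset I); [left | right];
  apply/fintype.subsetP => x /mem_class_unionP[T TP [S'T xT]].
  by apply: fintype.subsetP xT; rewrite same_side.
have [TI|TJ] := IHk T TP; last exact: fintype.subsetP TJ _ xT.
by move: S'nI; rewrite -(same_side T TP S'T) TI.
Qed.

Lemma not_strongly_connected_part k :
  I != finset.set0 -> J != finset.set0 -> ~ strongly_connected f (part f k).
Proof.
move=> /set0Pn[i iI] /set0Pn[j jJ] sc.
have [S SP iS] := partition_block_ex i (partition_part f k).
have [T TP jT] := partition_block_ex j (partition_part f k).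
have SI : S \subset I.
  case: (part_split SP) => // SJ.
  by move/setP/(_ i): IJ0; rewrite !inE iI (fintype.subsetP SJ i iS).
have TI := reach_subset_left (@part_split k) (sc S T SP TP) SI.
by move/setP/(_ j): IJ0; rewrite !inE jJ (fintype.subsetP TI j jT).
Qed.

End Decomposable.

Theorem theorem6 (R : realType) (n : nat) (f : vec R n -> vec R n) :
  topical f -> (indecomposable f <-> Ginf_strongly_connected f).
Proof.
move=> [_ f_mono]; split.
- move=> indec N [stabN _]; have [K fixK] := part_fixpoint_ex f.
  apply: strongly_connected_iso (graph_iso_fixpoint fixK stabN) _.
  exact: (strongly_connected_fixpoint f_mono (partition_part f K) fixK indec).
- move=> sc [I [J [IJ0 IJT I0 J0 I_finite]]]; have [N leastN] := least_stab_ex f.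
  exact: (not_strongly_connected_part f_mono IJ0 IJT I_finite I0 J0 (sc N leastN)).
Qed.
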